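(* Let $\Gamma$ be a graph on $k$ vertices with arc set $X$, and let $G$ be a finite group with identity $e$. Let $\alpha:X\to G$ be an ordinary voltage assignment, i.e. $\alpha(a^-)=\alpha(a)^{-1}$ for all arcs $a$. Let $\Gamma^{\alpha}$ be its lift, with vertex set $V\times G$ and with an arc $(a,g)$ from $(u,g)$ to $(v,g\alpha(a))$ for each arc $a$ from $u$ to $v$ and each $g\in G$. Fix $c_1,c_2,c_3,c_4\in\mathbb{R}$ with $c_1\neq0$, and let $U^{\alpha}=c_1A+c_2D+c_3I+c_4J$ be the universal adjacency matrix of $\Gamma^{\alpha}$. Let $B(U)=c_1B(A)+c_2B(D)+c_3B(I)+c_4B(J)$. Then $$\mathrm{Sp}(U^{\alpha})=\bigcup_{\rho\in\mathrm{Irep}(G)} d_\rho\cdot \mathrm{Sp}(\rho(B(U))),$$ where the union is a union of multisets.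
   Context: Graphs may have loops and multiple edges; every undirected edge is a pair of mutually reverse arcs $a,a^-$, and a loop contributes $2$ to the degree. $A$, $D$, $I$, $J$ denote the adjacency matrix, the diagonal degree matrix, the identity matrix and the all-ones matrix of $\Gamma^{\alpha}$. The base matrix $B(U)$ is the $k\times k$ matrix over the group algebra $\mathbb{C}(G)$ whose components are: - $B(A)_{uv}=\sum\alpha(a)$ over all arcs $a$ from $u$ to $v$ (and $0$ if there are none); - $B(D)=\mathrm{diag}(\deg(u)e)$; - $B(I)=\mathrm{diag}(e)$; - $B(J)_{uv}=\sum_{g\in G}g$ for all $u,v$. $\mathrm{Irep}(G)$ is a complete set of inequivalent unitary irreducible representations of $G$, and $d_\rho=\dim\rho$. The $\rho$-image $\rho(M)$ of a matrix $M$ over $\mathbb{C}(G)$ replaces each entry $\sum_g x_g g$ by the block $\sum_g x_g\rho(g)$; zero entries become zero blocks. $\mathrm{Sp}$ denotes the multiset of eigenvalues, and $m\cdot\mathrm{Sp}(M)$ repeats each eigenvalue $m$ times. *)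

From HB Require Import structures.
From mathcomp Require Import all_boot all_order all_algebra all_fingroup all_solvable all_field all_character.
Set Implicit Arguments. Unset Strict Implicit. Unset Printing Implicit Defensive.
Import Order.TTheory GRing.Theory Num.Theory.
Local Open Scope ring_scope.

Section Defs.
Variable C : numClosedFieldType.

(* A square matrix indexed by the elements of a finite type T
   (rows/columns ordered by enum T; spectra do not depend on the ordering). *)
Definition fmx (T : finType) (f : T -> T -> C) : 'M[C]_#|T| :=
  \matrix_(i < #|T|, j < #|T|) f (enum_val i) (enum_val j).

(* Multiplicity of x in the multiset Sp(M) of eigenvalues of M
   (algebraic multiplicity = multiplicity as a root of char_poly). *)
Definition Sp_mult n (M : 'M[C]_n) (x : C) : nat := mup x (char_poly M).

(* A (multi)graph given by its arcs: src/tgt maps X -> V. *)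
Section Graph.
Variables (V X : finType) (src tgt : X -> V).

Definition gdeg (u : V) : nat := #|[set a | src a == u]|.
Definition adjM : 'M[C]_#|V| :=
  fmx (fun u v => (#|[set a | (src a == u) && (tgt a == v)]|)%:R).
Definition degM : 'M[C]_#|V| := fmx (fun u v => (u == v)%:R * (gdeg u)%:R).
Definition idM : 'M[C]_#|V| := fmx (fun u v => (u == v)%:R).
Definition allonesM : 'M[C]_#|V| := fmx (fun u v => 1).

Definition univM (c1 c2 c3 c4 : C) : 'M[C]_#|V| :=
  c1 *: adjM + c2 *: degM + c3 *: idM + c4 *: allonesM.
End Graph.

Section Lift.
Variables (gT : finGroupType) (V X : finType) (src tgt : X -> V) (alpha : X -> gT).
Definition lift_src (b : X * gT) : V * gT := (src b.1, b.2).
Definition lift_tgt (b : X * gT) : V * gT := (tgt b.1, (b.2 * alpha b.1)%g).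

(* Group algebra C(G): an element sum_g x_g g is its coefficient function. *)

Definition gel (g : gT) : {ffun gT -> C^o} := [ffun h => ((h == g)%:R : C^o)].

Definition BA (u v : V) : {ffun gT -> C^o} := \sum_(a | (src a == u) && (tgt a == v)) gel (alpha a).
Definition BD (u v : V) : {ffun gT -> C^o} := if u == v then (gdeg src u)%:R *: gel 1%g else 0.
Definition BI (u v : V) : {ffun gT -> C^o} := if u == v then gel 1%g else 0.
Definition BJ (u v : V) : {ffun gT -> C^o} := \sum_(g : gT) gel g.
Definition BU (c1 c2 c3 c4 : C) (u v : V) : {ffun gT -> C^o} :=
  c1 *: BA u v + c2 *: BD u v + c3 *: BI u v + c4 *: BJ u v.
End Lift.

(* rho-image of a matrix over C(G): entry sum_g x_g g replaced by block sum_g x_g rho(g) *)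
Definition rho_image (gT : finGroupType) (V : finType) d
    (rho : mx_representation C [set: gT]%G d) (M : V -> V -> {ffun gT -> C^o})
    :=
  fmx (fun (p q : (V * 'I_d)%type) => (\sum_(g : gT) M p.1 q.1 g *: rho g) p.2 q.2).

End Defs.

(* The universal adjacency matrix of the lift is the group-convolution matrix
   L((u,g),(v,h)) = B(U)_uv (g^-1 h).  For an irreducible rho of degree d and a
   row index r < d, the (V x G) x (V x d) matrix with entries [u = w] rho(g)_rq
   intertwines L with rho(B(U)).  Putting these blocks side by side for all rho
   and r gives sum_rho d_rho (|V| d_rho) = |V| |G| columns, which are linearly
   independent because the Fourier transform of G is injective.  So L is
   similar to the block diagonal matrix carrying d_rho copies of rho(B(U)),
   and the characteristic polynomials agree. *)

From HB Require Import structures.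
From mathcomp Require Import all_boot all_order all_algebra all_fingroup all_solvable all_field all_character.
Import Order.TTheory GRing.Theory Num.Theory.
Local Open Scope ring_scope.
Set Implicit Arguments. Unset Strict Implicit. Unset Printing Implicit Defensive.

Section FinMatrix.
Variable R : pzSemiRingType.

Definition finmx (S T : finType) (f : S -> T -> R) : 'M[R]_(#|S|, #|T|) :=
  \matrix_(i, j) f (enum_val i) (enum_val j).

Lemma mul_finmx (S T U : finType) (f : S -> T -> R) (g : T -> U -> R) :
  finmx f *m finmx g = finmx (fun x z => \sum_y f x y * g y z).
Proof.
apply/matrixP=> i j; rewrite !mxE (big_enum_val (A := T)) /=.
by apply: eq_bigr => k _; rewrite !mxE.
Qed.

Lemma mul_rV_finmx (S T : finType) (v : 'rV[R]_#|S|) (f : S -> T -> R) y :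
  (v *m finmx f) 0 (enum_rank y) = \sum_x v 0 (enum_rank x) * f x y.
Proof.
rewrite mxE (big_enum_val (A := S)) /=.
by apply: eq_bigr => i _; rewrite !mxE enum_valK enum_rankK.
Qed.

End FinMatrix.

Lemma fmxE (C : numClosedFieldType) (T : finType) (f : T -> T -> C) :
  fmx f = finmx f.
Proof. by []. Qed.

Lemma sum_pair (R : nmodType) (S T : finType) (F : S * T -> R) :
  \sum_p F p = \sum_x \sum_y F (x, y).
Proof. by rewrite pair_big; apply: eq_bigr => -[]. Qed.

Lemma sum_tag_ord (I : finType) (d : I -> nat) (F : I -> nat) :
  (\sum_(t : {i : I & 'I_(d i)}) F (tag t) = \sum_i d i * F i)%N.
Proof.
rewrite -(sig_big_dep xpredT (fun _ _ => true) (fun i _ => F i)) /=.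
by apply: eq_bigr => i _; rewrite sum_nat_const card_ord.
Qed.

Lemma card_set_natr (R : pzSemiRingType) (T : finType) (Q : pred T) :
  #|[set a | Q a]|%:R = \sum_a (Q a)%:R :> R.
Proof.
rewrite -sum1dep_card natr_sum big_mkcond /=.
by apply: eq_bigr => a _; case: (Q a).
Qed.

Section CharPoly.
Variable R : comNzRingType.

Lemma char_poly_castmx m n (e : m = n) (A : 'M[R]_m) :
  char_poly (castmx (e, e) A) = char_poly A.
Proof. by case: n / e; rewrite castmx_id. Qed.

Lemma char_poly_block m n (A : 'M[R]_m) (B : 'M[R]_n) :
  char_poly (block_mx A 0 0 B) = char_poly A * char_poly B.
Proof.
rewrite /char_poly /char_poly_mx map_block_mx (scalar_mx_block m n).
by rewrite opp_block_mx add_block_mx !map_mx0 oppr0 !addr0 subr0 det_ublock.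
Qed.

Lemma char_poly_mxdiag p (p_ : 'I_p -> nat) (B_ : forall i, 'M[R]_(p_ i)) :
  char_poly (\mxdiag_i B_ i) = \prod_i char_poly (B_ i).
Proof.
elim: p => [|p IHp] in p_ B_ *.
  move: (\mxdiag_i B_ i); rewrite !big_ord0 => M.
  by rewrite /char_poly det_mx00.
by rewrite mxdiag_recl char_poly_castmx char_poly_block IHp big_ord_recl.
Qed.

End CharPoly.

Lemma char_poly_intertwined (F : fieldType) n (A B Q : 'M[F]_n) :
  Q \in unitmx -> A *m Q = Q *m B -> char_poly A = char_poly B.
Proof.
move=> Qunit AQ; pose Qp := map_mx polyC Q.
have QpA : char_poly_mx A *m Qp = Qp *m char_poly_mx B.
  rewrite /char_poly_mx mulmxBl mulmxBr -!map_mxM AQ.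
  by rewrite mul_scalar_mx mul_mx_scalar.
have detQp_neq0 : \det Qp != 0.
  by rewrite det_map_mx polyC_eq0 -unitfE -unitmxE.
by apply: (mulIf detQp_neq0); rewrite -det_mulmx QpA det_mulmx mulrC.
Qed.

Lemma char_poly_mxrow_intertwined (F : fieldType) n p (p_ : 'I_p -> nat)
    (A : 'M[F]_n) (P_ : forall i, 'M[F]_(n, p_ i)) (B_ : forall i, 'M[F]_(p_ i)) :
    (\sum_i p_ i)%N = n -> row_free (\mxrow_i P_ i) ->
    (forall i, A *m P_ i = P_ i *m B_ i) ->
  char_poly A = \prod_i char_poly (B_ i).
Proof.
move=> sum_p Pfree AP; rewrite -char_poly_mxdiag.
have : A *m \mxrow_i P_ i = \mxrow_i P_ i *m \mxdiag_i B_ i.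
  by rewrite mul_mxrow mul_mxrow_mxdiag; apply: eq_mxrow.
move: (\mxrow_i P_ i) (\mxdiag_i B_ i) Pfree; rewrite sum_p => Q B Qfree AQ.
by apply: (char_poly_intertwined _ AQ); rewrite -row_free_unit.
Qed.

Lemma row_free_mxrow (F : fieldType) m p (p_ : 'I_p -> nat)
    (P_ : forall i, 'M[F]_(m, p_ i)) :
    (forall v : 'rV[F]_m, (forall i, v *m P_ i = 0) -> v = 0) ->
  row_free (\mxrow_i P_ i).
Proof.
move=> Pinj; apply: inj_row_free => v vP0; apply: Pinj => i.
by rewrite -(mxrowK (fun i => v *m P_ i)) -mul_mxrow vP0 submxrow0.
Qed.

Lemma mup_prod (F : fieldType) (I : Type) (s : seq I) (p : I -> {poly F}) x :
  (forall i, p i != 0) -> mup x (\prod_(i <- s) p i) = (\sum_(i <- s) mup x (p i))%N.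
Proof.
move=> p_neq0; elim: s => [|i s IHs]; first by rewrite !big_nil mupNroot ?root1.
rewrite !big_cons mupM ?IHs ?p_neq0 // prodf_seq_neq0.
by elim: s {IHs} => //= j s ->; rewrite p_neq0.
Qed.

Section GroupConvolution.
Variables (C : numClosedFieldType) (gT : finGroupType).
Variables (Irep : finType) (d : Irep -> nat).
Variable rho : forall i : Irep, mx_representation C [set: gT]%G (d i).
Hypothesis rho_irr : forall i, mx_irreducible (rho i).
Hypothesis rho_ineq : forall i j, mx_rsim (rho i) (rho j) -> i = j.
Hypothesis rho_complete : forall n (r : mx_representation C [set: gT]%G n),
  mx_irreducible r -> exists i, mx_rsim r (rho i).

Let G := [set: gT]%G.
Let sG := DecSocleType (regular_repr C G).

Let pcharC'G : ([pchar C]^'.-group G)%g.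
Proof. by apply/pgroupP=> p _; rewrite inE /= pchar_num. Qed.

(* The Wedderburn components of the group algebra act faithfully through the
   irreducible representations, so an element of the group algebra acting
   trivially in all of them vanishes. *)
Lemma fourier_inj (y : gT -> C) :
  (forall i, \sum_h y h *: rho i h = 0) -> forall h, y h = 0.
Proof.
move=> y_rho0.
pose A := \sum_(h in G) y h *: regular_repr C G h.
have A_gring : (A \in group_ring C G)%MS by apply/envelop_mxP; exists y.
have irr_opA0 j : gring_op (irr_repr (sG := sG) j) A = 0.
  have [i [B _ Bfree Bhom]] := rho_complete (socle_irr j).
  rewrite linear_sum; apply: (row_free_inj Bfree); rewrite mul0mx mulmx_suml.
  transitivity (B *m \sum_h y h *: rho i h); last by rewrite y_rho0 mulmx0.
  rewrite mulmx_sumr; apply: eq_big => [h|h _]; first by rewrite inE.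
  by rewrite linearZ /= gring_opG ?inE // -scalemxAl Bhom ?inE // scalemxAr.
have A0 : A = 0.
  rewrite -[A]mul1mx -(Wedderburn_sum_id_pchar sG pcharC'G) mulmx_suml.
  apply: big1 => j _.
  apply: (regular_op_inj_pchar (sG := sG) pcharC'G (socle_irr j));
    rewrite ?inE ?irr_reprK_pchar //.
  - have /andP[_ Wj_ideal] := Wedderburn_ideal j.
    apply: submx_trans Wj_ideal; apply: mem_mulsmx => //.
    exact: Wedderburn_id_mem.
  - exact: mem0mx.
  - by rewrite linear0 gring_opM ?irr_reprK_pchar // irr_opA0 mulmx0.
move=> h; have := congr1 (gring_proj h) A0.
rewrite linear0 /A linear_sum (bigD1 h) ?inE //= big1 => [|g /andP[_ ngh]].
  rewrite addr0 linearZ /= gring_projE ?inE // eqxx => /matrixP /(_ 0 0).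
  by rewrite !mxE /= mulr1.
by rewrite linearZ /= gring_projE ?inE // eq_sym (negPf ngh) scaler0.
Qed.

Lemma sum_irr_degree_sq : (\sum_i d i ^ 2)%N = #|gT|.
Proof.
pose f i : sG := irr_comp sG (rho i).
have rho_f i : mx_rsim (rho i) (irr_repr (f i)).
  exact: (rsim_irr_comp_pchar sG pcharC'G (rho_irr i)).
have f_inj : injective f.
  move=> i i' fii'; apply: rho_ineq; apply: mx_rsim_trans (rho_f i) _.
  by rewrite fii'; apply: mx_rsim_sym.
have f_surj j : exists i, f i = j.
  have [i rho_i] := rho_complete (socle_irr j); exists i.
  by rewrite /f -(irr_comp_rsim_pchar sG pcharC'G rho_i) irr_reprK_pchar.
have f_bij : bijective f.
  apply: (@inj_card_bij _ _ f f_inj); rewrite -!cardsT.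
  have -> : [set: sG] = f @: [set: Irep].
    by apply/setP => j; have [i <-] := f_surj j; rewrite !inE imset_f ?inE.
  exact: leq_imset_card.
rewrite -cardsT -(sum_irr_degree_pchar sG pcharC'G).
  rewrite (reindex f) /=; last exact: onW_bij.
  by apply: eq_bigr => i _; case: (rho_f i) => B deg_eq _ _; rewrite deg_eq.
exact: group_closure_closed_field.
Qed.

Variable V : finType.

Definition rep_coef_mx i (r : 'I_(d i)) :
    'M[C]_(#|{: V * gT}|, #|{: V * 'I_(d i)}|) :=
  finmx (fun (x : V * gT) (y : V * 'I_(d i)) => (x.1 == y.1)%:R * rho i x.2 r y.2).

Lemma rep_coef_mx_inj (v : 'rV[C]_#|{: V * gT}|) :
  (forall i (r : 'I_(d i)), v *m rep_coef_mx r = 0) -> v = 0.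
Proof.
move=> v_coef0; apply/rowP => a; rewrite mxE -(enum_valK a).
case: (enum_val a) => w h; move: h.
apply: (fourier_inj (y := fun h => v 0 (enum_rank (w, h)))) => i.
apply/matrixP => r p; rewrite summxE !mxE.
move/matrixP/(_ 0 (enum_rank (w, p))): (v_coef0 i r).
rewrite mul_rV_finmx mxE sum_pair /=.
rewrite (bigD1 w) //= [X in _ + X]big1 ?addr0 => [|u uw]; last first.
  by apply: big1 => g _; rewrite (negPf uw) mul0r mulr0.
by move=> coef0; rewrite -[RHS]coef0; apply: eq_bigr => g _; rewrite eqxx mxE mul1r.
Qed.

Variable B : V -> V -> {ffun gT -> C^o}.

Definition conv_mx : 'M[C]_#|{: V * gT}| :=
  finmx (fun x y : V * gT => B x.1 y.1 (x.2^-1 * y.2)%g).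

Lemma conv_mx_rep_coef i r :
  conv_mx *m rep_coef_mx r = rep_coef_mx r *m rho_image (rho i) B.
Proof.
rewrite /rho_image fmxE !mul_finmx; apply/matrixP => a b; rewrite !mxE.
case: (enum_val a) (enum_val b) => [u h] [w q] /=.
rewrite !sum_pair /= (bigD1 w) //= [RHS](bigD1 u) //=.
rewrite [X in _ + X = _]big1 => [|v vw]; last first.
  by apply: big1 => k _; rewrite (negPf vw) mul0r mulr0.
rewrite [X in _ = _ + X]big1 => [|v vu]; last first.
  by apply: big1 => k _; rewrite eq_sym (negPf vu) !mul0r.
rewrite !eqxx !addr0 (reindex_inj (mulgI h)) /=.
under eq_bigr => g _ do rewrite mulKg repr_mxM ?inE // mxE mul1r mulr_sumr.
under [RHS]eq_bigr => p _ do rewrite mul1r summxE mulr_sumr.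
rewrite exchange_big /=; apply: eq_bigr => g _; apply: eq_bigr => p _.
by rewrite mxE mulrCA.
Qed.

Let coef_index : finType := {i : Irep & 'I_(d i)}.

Lemma char_poly_conv_mx :
  char_poly conv_mx =
  \prod_(t : coef_index) char_poly (rho_image (rho (tag t)) B).
Proof.
rewrite (big_enum_val (A := coef_index)) /=.
apply: (char_poly_mxrow_intertwined
  (P_ := fun j => rep_coef_mx (tagged (enum_val j)))) => [||j];
  last exact: conv_mx_rep_coef.
- rewrite -(big_enum_val (A := coef_index)
    (fun t => #|{: V * 'I_(d (tag t))}|)) /=.
  under eq_bigr do rewrite card_prod card_ord.
  rewrite (sum_tag_ord d (fun i => #|V| * d i)%N) card_prod.
  rewrite -sum_irr_degree_sq big_distrr /=.
  by apply: eq_bigr => i _; rewrite mulnCA mulnn.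
- apply: row_free_mxrow => v v_coef0; apply: rep_coef_mx_inj => i r.
  by have := v_coef0 (enum_rank (Tagged (fun i => 'I_(d i)) r)); rewrite enum_rankK.
Qed.

Lemma Sp_mult_conv_mx x :
  Sp_mult conv_mx x = (\sum_i d i * Sp_mult (rho_image (rho i) B) x)%N.
Proof.
rewrite /Sp_mult char_poly_conv_mx mup_prod; last first.
  by move=> t; rewrite monic_neq0 // char_poly_monic.
exact: (sum_tag_ord d (fun i => mup x (char_poly (rho_image (rho i) B)))).
Qed.

End GroupConvolution.

Section LiftMatrices.
Variables (gT : finGroupType) (V X : finType).
Variables (src tgt : X -> V) (alpha : X -> gT).

Let pairl_inj (h : gT) : injective (fun a : X => (a, h)).
Proof. by move=> a b [->]. Qed.

Lemma lift_arcs_between u h v k :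
  [set b : X * gT | lift_src src b == (u, h) & lift_tgt tgt alpha b == (v, k)] =
  (fun a => (a, h)) @: [set a | (src a == u) && (tgt a == v) && (alpha a == h^-1 * k)%g].
Proof.
apply/setP => -[a g]; rewrite !inE /lift_src /lift_tgt /= !xpair_eqE.
apply/idP/imsetP => [|[a' /[!inE] /andP[/andP[sa ta] /eqP al] [-> ->]]].
  case/andP => /andP[/eqP sa /eqP gh] /andP[/eqP ta /eqP ga].
  by exists a; rewrite ?inE ?sa ?ta ?eqxx /= -?ga ?gh ?mulKg.
by rewrite sa ta al mulKVg !eqxx.
Qed.

Lemma lift_arcs_from u h :
  [set b : X * gT | lift_src src b == (u, h)] =
  (fun a => (a, h)) @: [set a | src a == u].
Proof.
apply/setP => -[a g]; rewrite !inE /lift_src /= !xpair_eqE.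
apply/idP/imsetP => [/andP[sa /eqP gh]|[a' /[!inE] sa [-> ->]]].
  by exists a; rewrite ?inE ?sa ?gh.
by rewrite sa eqxx.
Qed.

Lemma univM_lift (C : numClosedFieldType) (c1 c2 c3 c4 : C) :
  univM (lift_src src) (lift_tgt tgt alpha) c1 c2 c3 c4 =
  conv_mx (BU src tgt alpha c1 c2 c3 c4).
Proof.
apply/matrixP => i j; rewrite !mxE.
case: (enum_val i) (enum_val j) => [u h] [v k] /=.
rewrite /BU !ffunE; set z := (h^-1 * k)%g.
congr (_ * _ + _ * _ + _ * _ + _ * _).
- rewrite lift_arcs_between (card_imset _ (@pairl_inj h)) card_set_natr.
  rewrite /BA sum_ffunE [RHS]big_mkcond /=; apply: eq_bigr => a _.
  by rewrite ffunE; case: ((src a == u) && (tgt a == v)) => //=; rewrite eq_sym.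
- rewrite /gdeg lift_arcs_from (card_imset _ (@pairl_inj h)).
  rewrite /BD xpair_eqE (eq_mulVg1 h k) -/z.
  by case: (u == v) => /=; rewrite ?mul0r !ffunE //= mulrC.
- by rewrite /BI xpair_eqE (eq_mulVg1 h k) -/z; case: (u == v); rewrite ffunE.
- rewrite /BJ sum_ffunE (bigD1 z) //= ffunE eqxx big1 ?addr0 // => g gz.
  by rewrite ffunE eq_sym (negPf gz).
Qed.

End LiftMatrices.

Theorem mainTheorem2
  (C : numClosedFieldType) (gT : finGroupType)
  (V X : finType) (src tgt : X -> V) (rev : X -> X)
  (rev_inv : forall a, rev (rev a) = a)
  (rev_nofix : forall a, rev a != a)
  (rev_src : forall a, src (rev a) = tgt a)
  (rev_tgt : forall a, tgt (rev a) = src a)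
  (alpha : X -> gT)
  (alpha_rev : forall a, alpha (rev a) = ((alpha a)^-1)%g)
  (c1 c2 c3 c4 : C)
  (c1_real : c1 \is Num.real) (c2_real : c2 \is Num.real)
  (c3_real : c3 \is Num.real) (c4_real : c4 \is Num.real)
  (c1_neq0 : c1 != 0)
  (Irep : finType) (d : Irep -> nat)
  (rho : forall i : Irep, mx_representation C [set: gT]%G (d i))
  (rho_irr : forall i, mx_irreducible (rho i))
  (rho_unitary : forall i (g : gT),
      rho i g *m (map_mx Num.conj (rho i g))^T = 1%:M)
  (rho_ineq : forall i j, mx_rsim (rho i) (rho j) -> i = j)
  (rho_complete : forall n (r : mx_representation C [set: gT]%G n),
      mx_irreducible r -> exists i, mx_rsim r (rho i)) :
  forall x : C,
    Sp_mult (univM (lift_src src) (lift_tgt tgt alpha) c1 c2 c3 c4) x =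
    (\sum_(i : Irep) d i * Sp_mult (rho_image (rho i) (BU src tgt alpha c1 c2 c3 c4)) x)%N.
Proof.
by move=> x; rewrite univM_lift (Sp_mult_conv_mx rho_irr rho_ineq rho_complete).
Qed.
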